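(* Let $N\ge2$ and let $\Theta_N\colon\tilde\Gamma_0(N)\to K_2(\mathbb{Q}(\mu_N))/Z_N$ be as below. If $N$ is divisible by two distinct primes, then $\Theta_N$ takes values in $K_2(\mathbb{Z}[\mu_N])/Z_N$. If $N$ is a prime power, then the restriction of $\Theta_N$ to $\Gamma_1(N)$ takes values in $K_2(\mathbb{Z}[\mu_N])/Z_N$.
   Context: $\zeta_N$ is a primitive $N$th root of unity; $Z_N$ is the subgroup of $K_2(\mathbb{Q}(\mu_N))$ generated by $\{-1,-\zeta_N\}$; $K_2(\mathbb{Z}[\mu_N])$ is viewed as a subgroup of $K_2(\mathbb{Q}(\mu_N))$. $\tilde\Gamma_0(N)=\{\begin{pmatrix}a&b\\c&d\end{pmatrix}\in\mathrm{GL}_2(\mathbb{Z}):N\mid c\}$ and $\Gamma_1(N)=\{\begin{pmatrix}a&b\\c&d\end{pmatrix}\in\mathrm{SL}_2(\mathbb{Z}):N\mid c,\ d\equiv1\bmod N\}$. For $\gamma=\begin{pmatrix}a&b\\c&d\end{pmatrix}\in\tilde\Gamma_0(N)$, an $N$-connecting sequence is $(b_i,d_i)\in\mathbb{Z}^2$, $0\le i\le k$, with $(b_0,d_0)=(0,1)$, $(b_k,d_k)=\det(\gamma)(b,d)$, $b_{i-1}d_i-b_id_{i-1}=1$, and $N\nmid d_i$ for $i<k$; such sequences exist, and $\Theta_{N,\gamma}=\sum_{i=1}^k\{1-\zeta_N^{d_i},1-\zeta_N^{-d_{i-1}}\}\bmod Z_N$ is independent of the choice. *)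

From HB Require Import structures.
From mathcomp Require Import all_boot all_order all_algebra all_field.
Set Implicit Arguments. Unset Strict Implicit. Unset Printing Implicit Defensive.
Import Order.TTheory GRing.Theory Num.Theory.
Local Open Scope ring_scope.

(* Milnor K_2 of a field L (= Quillen K_2 by Matsumoto's theorem):     *)
(* the free abelian group on symbols {a,b}, a,b in L^x, modulo the     *)
(* Steinberg relations (bimultiplicativity and {a,1-a} = 0).           *)
(* An element of the free abelian group is represented by a finite     *)
(* formal sum: a list of entries (k, a, b) standing for k*{a,b}.       *)
Section K2.
Variable L : fieldType.

Definition fsum := seq (int * L * L).

Definition fcoef (s : fsum) (a b : L) : int :=
  \sum_(e <- s | (e.1.2 == a) && (e.2 == b)) e.1.1.

Definition fscale (k : int) (s : fsum) : fsum :=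
  [seq (k * e.1.1, e.1.2, e.2) | e <- s].

Definition fsum_wf (s : fsum) : bool :=
  all (fun e => (e.1.2 != 0) && (e.2 != 0)) s.

Inductive K2rel : Type :=
  | RelMulL of L & L & L
  | RelMulR of L & L & L
  | RelSt of L.

Definition rel_fsum (r : K2rel) : fsum :=
  match r with
  | RelMulL a a' b => [:: (1, a * a', b); (-1, a, b); (-1, a', b)]
  | RelMulR a b b' => [:: (1, a, b * b'); (-1, a, b); (-1, a, b')]
  | RelSt a => [:: (1, a, 1 - a)]
  end.

Definition rel_ok (r : K2rel) : bool :=
  match r with
  | RelMulL a a' b => [&& a != 0, a' != 0 & b != 0]
  | RelMulR a b b' => [&& a != 0, b != 0 & b' != 0]
  | RelSt a => (a != 0) && (a != 1)
  end.

Definition in_steinberg (s : fsum) : Prop :=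
  exists rs : seq (int * K2rel),
    all (fun x => rel_ok x.2) rs /\
    forall a b, fcoef s a b =
      fcoef (flatten [seq fscale x.1 (rel_fsum x.2) | x <- rs]) a b.

Definition K2eq (s1 s2 : fsum) : Prop := in_steinberg (s1 ++ fscale (-1) s2).

(* For a number field L these are exactly the P-adic valuations at the *)
(* maximal ideals P of the ring of integers.                           *)
Definition is_dval (v : L -> int) : Prop :=
  (forall x y, x != 0 -> y != 0 -> v (x * y) = v x + v y) /\
  (forall x y, x != 0 -> y != 0 -> x + y != 0 -> Num.min (v x) (v y) <= v (x + y)) /\
  (exists x, x != 0 /\ v x = 1).

(* (-1)^{v(a)v(b)} a^{v(b)} / b^{v(a)}, a unit at v; its residue is the tame symbol *)
Definition tame_gen (v : L -> int) (a b : L) : L :=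
  (-1) ^ (v a * v b) * a ^ (v b) * b ^ (- v a).

Definition tame_fsum (v : L -> int) (s : fsum) : L :=
  \prod_(e <- s) tame_gen v e.1.2 e.2 ^ e.1.1.

(* the tame symbol at v of s is trivial (residue of tame_fsum is 1) *)
Definition tame_trivial (v : L -> int) (s : fsum) : bool :=
  let t := tame_fsum v s in (t == 1) || (0 < v (t - 1)).

(* s represents an element of K_2(O_L) viewed inside K_2(L), i.e. of the
   tame kernel (localization sequence; K_2 of finite fields vanishes) *)
Definition in_K2O (s : fsum) : Prop :=
  fsum_wf s /\ forall v, is_dval v -> tame_trivial v s.

(* the class of s in K_2(L)/Z_N lies in K_2(O_L)/Z_N, where Z_N is
   generated by {-1, -z} *)
Definition in_K2O_mod (z : L) (s : fsum) : Prop :=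
  exists (t : fsum) (k : int), in_K2O t /\ K2eq s (t ++ [:: (k, -1, - z)]).

End K2.

Definition in_tGamma0 (N : nat) (a b c d : int) : Prop :=
  ((a * d - b * c = 1) \/ (a * d - b * c = -1)) /\ (N%:Z %| c)%Z.

Definition in_Gamma1 (N : nat) (a b c d : int) : Prop :=
  a * d - b * c = 1 /\ (N%:Z %| c)%Z /\ (N%:Z %| d - 1)%Z.

(* s = [:: (b_0,d_0); ...; (b_k,d_k)] *)
Definition connecting_seq (N : nat) (a b c d : int) (s : seq (int * int)) : Prop :=
  exists k : nat,
    size s = k.+1 /\
    nth (0, 0) s 0 = (0, 1) /\
    nth (0, 0) s k = ((a * d - b * c) * b, (a * d - b * c) * d) /\
    (forall i : nat, (0 < i <= k)%N ->
        (nth (0, 0) s i.-1).1 * (nth (0, 0) s i).2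
        - (nth (0, 0) s i).1 * (nth (0, 0) s i.-1).2 = 1) /\
    (forall i : nat, (i < k)%N -> ~~ (N%:Z %| (nth (0, 0) s i).2)%Z).

Definition theta_fsum (L : fieldType) (z : L) (s : seq (int * int)) : fsum L :=
  [seq (1%:Z, 1 - z ^ p.2.2, 1 - z ^ (- p.1.2)) | p <- zip s (behead s)].

From HB Require Import structures.
From mathcomp Require Import all_boot all_order all_algebra all_field.
From mathcomp Require Import ring zify.
Set Implicit Arguments. Unset Strict Implicit. Unset Printing Implicit Defensive.
Import Order.TTheory GRing.Theory Num.Theory.
Local Open Scope ring_scope.

(* Since K_2 of a finite field vanishes, K_2(Z[mu_N]) is the kernel of the tame symbols,
   so it suffices to show that at every discrete valuation v the tame symbol of Theta is
   congruent to 1 modulo P_v.  Write x_c = 1 - z^c and X = x_1.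
   If X is a v-unit, then x_{d_{i-1}} and x_{d_i} are never both in P_v, because
   b_{i-1} d_i - b_i d_{i-1} = 1; the symbols then telescope, and the last x_{d_k} is a
   unit as d_k a = 1 mod N.  X is a v-unit whenever N has two prime divisors, since
   otherwise both primes would lie in P_v.
   If X is in P_v, then N = p^r and v(x_{p^s u}) = p^s v(X) for p not dividing u, and
   x_{p^s u} / x_{p^s} is congruent to u.  By Fermat's little theorem each symbol
   {x_{d_i}, x_{-d_{i-1}}} agrees with {X, x_{d_i}}^-1 {x_{d_{i-1}}, X}^-1 up to a
   principal unit, so the product collapses to ({X, X} {X, x_{d_k}})^-1, which is
   {X, X}^-2 = 1 when d_k = 1 mod N. *)

Lemma dvdz_fermat p s (u : int) : prime p -> ~~ (p%:Z %| u)%Z ->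
  (p%:Z %| u ^+ (p ^ s - 1) - 1)%Z.
Proof.
move=> pp hu; have chp := pchar_Fp pp.
set x : 'F_p := u%:~R.
have x0 : x != 0 by rewrite /x -(dvdz_pcharf chp).
have frob t : x ^+ (p ^ t) = x.
  elim: t => [|t IH]; first by rewrite expn0 expr1.
  by rewrite expnSr exprM IH; have := expf_card x; rewrite card_Fp.
have x1 : x ^+ (p ^ s - 1) = 1.
  by apply: (mulfI x0); rewrite mulr1 -exprS subn1 prednK ?frob // expn_gt0 prime_gt0.
by rewrite (dvdz_pcharf chp) intrB rmorphXn /= -/x x1 subrr.
Qed.

Lemma signz_sqr (R : unitRingType) (e : int) : 0 <= e -> (-1 : R) ^ (e * e) = (-1) ^ e.
Proof. by case: e => // e _; rewrite -PoszM -!exprnP -signr_odd oddM andbb signr_odd. Qed.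

Lemma prod_1subMroot (L : fieldType) (e y : L) q : q.-primitive_root e -> y != 0 ->
  \prod_(i < q) (1 - y * e ^+ i) = 1 - y ^+ q.
Proof.
move=> pe y0.
have := congr1 (fun P => P.[y^-1]) (factor_Xn_sub_1 pe).
rewrite horner_prod hornerD hornerN hornerXn hornerC big_mkord => h.
have -> : \prod_(i < q) (1 - y * e ^+ i) = \prod_(i < q) (y * (y^-1 - e ^+ i)).
  by apply: eq_bigr => i _; rewrite mulrBr mulfV.
rewrite big_split /= prodr_const card_ord.
have -> : \prod_(i < q) (y^-1 - e ^+ i) = y^-1 ^+ q - 1.
  by rewrite -h; apply: eq_bigr => i _; rewrite hornerXsubC.
by rewrite mulrBr mulr1 -exprMn mulfV // expr1n.
Qed.

Section DiscreteValuation.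
Variables (L : fieldType) (v : L -> int).
Hypothesis hv : is_dval v.

Lemma dvalM x y : x != 0 -> y != 0 -> v (x * y) = v x + v y.
Proof. by case: hv => H _; apply: H. Qed.

Lemma dvalD x y : x != 0 -> y != 0 -> x + y != 0 -> Num.min (v x) (v y) <= v (x + y).
Proof. by case: hv => _ [H _]; apply: H. Qed.

Lemma dval1 : v 1 = 0.
Proof. by have := dvalM (oner_neq0 L) (oner_neq0 L); rewrite mulr1 => h; apply: (addrI (v 1)); rewrite addr0 -h. Qed.

Lemma dvalV x : x != 0 -> v x^-1 = - v x.
Proof.
by move=> x0; have := dvalM x0 (invr_neq0 x0); rewrite mulfV // dval1 => h; lia.
Qed.

Lemma dvalN1 : v (-1) = 0.
Proof.
have n1 : (-1 : L) != 0 by rewrite oppr_eq0 oner_neq0.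
by have := dvalM n1 n1; rewrite mulrNN mulr1 dval1 => h; lia.
Qed.

Lemma dvalN x : x != 0 -> v (- x) = v x.
Proof.
by move=> x0; rewrite -mulN1r dvalM ?dvalN1 ?add0r // oppr_eq0 oner_neq0.
Qed.

Lemma dvalXn x n : x != 0 -> v (x ^+ n) = n%:Z * v x.
Proof.
move=> x0; elim: n => [|n IH]; first by rewrite expr0 dval1 mul0r.
by rewrite exprS dvalM ?expf_neq0 // IH intS mulrDl mul1r.
Qed.

Lemma dvalXz x (n : int) : x != 0 -> v (x ^ n) = n * v x.
Proof.
move=> x0; case: n => n; first by rewrite dvalXn.
by rewrite NegzE -exprnN dvalV ?expf_neq0 // dvalXn // mulNr.
Qed.

Lemma dval_prod (I : Type) (r : seq I) (F : I -> L) : (forall i, F i != 0) ->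
  v (\prod_(i <- r) F i) = \sum_(i <- r) v (F i).
Proof.
move=> F0; elim: r => [|i r IH]; first by rewrite !big_nil dval1.
rewrite !big_cons dvalM ?IH ?F0 //.
by rewrite prodf_seq_neq0; apply: sub_all (all_predT r) => j _; rewrite F0.
Qed.

Definition vring x := (x == 0) || (0 <= v x).
Definition videal x := (x == 0) || (0 < v x).
Definition vunit1 x := (x != 0) && videal (x - 1).

Lemma vringE x : x != 0 -> vring x = (0 <= v x).
Proof. by rewrite /vring => /negPf ->. Qed.

Lemma vring0 : vring 0. Proof. by rewrite /vring eqxx. Qed.
Lemma vring1 : vring 1. Proof. by rewrite /vring dval1 lexx orbT. Qed.
Lemma videal0 : videal 0. Proof. by rewrite /videal eqxx. Qed.
Lemma videal1F : ~~ videal 1. Proof. by rewrite /videal oner_eq0 dval1 ltxx. Qed.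

Lemma videal_vring x : videal x -> vring x.
Proof. by rewrite /videal /vring => /orP[->|/ltW ->]; rewrite ?orbT. Qed.

Lemma vring_unit x : vring x -> ~~ videal x -> x != 0 /\ v x = 0.
Proof.
rewrite /vring /videal; have [->|x0] := eqVneq x 0; first by [].
by rewrite /= -leNgt => h1 h2; split => //; apply/eqP; rewrite eq_le h1 h2.
Qed.

Lemma vring_unitP x : x != 0 -> v x = 0 -> vring x.
Proof. by move=> x0 vx; rewrite vringE // vx. Qed.

Lemma vringN x : vring (- x) = vring x.
Proof. by rewrite /vring oppr_eq0; have [//|x0] := eqVneq x 0; rewrite dvalN. Qed.

Lemma videalN x : videal (- x) = videal x.
Proof. by rewrite /videal oppr_eq0; have [//|x0] := eqVneq x 0; rewrite dvalN. Qed.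

Lemma vringD x y : vring x -> vring y -> vring (x + y).
Proof.
rewrite /vring; have [->|x0] := eqVneq x 0; first by rewrite add0r.
have [->|y0] := eqVneq y 0; first by rewrite addr0 (negPf x0).
have [//|s0] := eqVneq (x + y) 0; move=> /= hx hy.
by apply: le_trans (dvalD x0 y0 s0); rewrite /Num.min; case: ifP.
Qed.

Lemma videalD x y : videal x -> videal y -> videal (x + y).
Proof.
rewrite /videal; have [->|x0] := eqVneq x 0; first by rewrite add0r.
have [->|y0] := eqVneq y 0; first by rewrite addr0 (negPf x0).
have [//|s0] := eqVneq (x + y) 0; move=> /= hx hy.
by apply: lt_le_trans (dvalD x0 y0 s0); rewrite /Num.min; case: ifP.
Qed.

Lemma vringB x y : vring x -> vring y -> vring (x - y).
Proof. by move=> hx hy; rewrite vringD ?vringN. Qed.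

Lemma videalB x y : videal x -> videal y -> videal (x - y).
Proof. by move=> hx hy; rewrite videalD ?videalN. Qed.

Lemma vring_cong g c : vring c -> videal (g - c) -> vring g.
Proof. by move=> hc hgc; rewrite -(subrK c g); apply: vringD => //; apply: videal_vring. Qed.

Lemma vringM x y : vring x -> vring y -> vring (x * y).
Proof.
rewrite /vring; have [->|x0] := eqVneq x 0; first by rewrite mul0r eqxx.
have [->|y0] := eqVneq y 0; first by rewrite mulr0 eqxx.
by rewrite mulf_eq0 (negPf x0) (negPf y0) /= dvalM //; apply: addr_ge0.
Qed.

Lemma videalMl x y : vring x -> videal y -> videal (x * y).
Proof.
rewrite /vring /videal; have [->|x0] := eqVneq x 0; first by rewrite mul0r eqxx.
have [->|y0] := eqVneq y 0; first by rewrite mulr0 eqxx.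
by rewrite mulf_eq0 (negPf x0) (negPf y0) /= dvalM //; lia.
Qed.

Lemma videalMr x y : videal x -> vring y -> videal (x * y).
Proof. by move=> hx hy; rewrite mulrC videalMl. Qed.

Lemma vringX x n : vring x -> vring (x ^+ n).
Proof. by move=> hx; elim: n => [|n IH]; rewrite ?expr0 ?vring1 // exprS vringM. Qed.

Lemma vring_nat n : vring n%:R.
Proof. by elim: n => [|n IH]; rewrite ?vring0 // -addn1 natrD vringD ?vring1. Qed.

Lemma vring_int (n : int) : vring n%:~R.
Proof. by case: n => n; rewrite ?NegzE ?mulrNz ?vringN vring_nat. Qed.

Lemma videal_sum (I : Type) (r : seq I) (F : I -> L) :
  (forall i, videal (F i)) -> videal (\sum_(i <- r) F i).
Proof. by move=> h; elim: r => [|i r IH]; rewrite ?big_nil ?videal0 // big_cons videalD. Qed.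

Lemma videal_cong_unit g c : vring g -> videal (g - c) -> ~~ videal c -> g != 0 /\ v g = 0.
Proof.
move=> hg hgc hc; apply: vring_unit => //; apply: contra hc => hs.
by rewrite -videalN -(addKr g (- c)) addrC videalB.
Qed.

Lemma videal_congX g c n : vring g -> vring c -> videal (g - c) -> videal (g ^+ n - c ^+ n).
Proof.
move=> hg hc hs; elim: n => [|n IH]; first by rewrite !expr0 subrr videal0.
have -> : g ^+ n.+1 - c ^+ n.+1 = g * (g ^+ n - c ^+ n) + c ^+ n * (g - c).
  by rewrite !exprS; ring.
by rewrite videalD // videalMl // vringX.
Qed.

Lemma vunit1_1 : vunit1 1. Proof. by rewrite /vunit1 oner_eq0 subrr videal0. Qed.

Lemma dval_vunit1 x : vunit1 x -> v x = 0.
Proof.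
case/andP=> x0 hs.
by case: (videal_cong_unit (vring_cong vring1 hs) hs videal1F).
Qed.

Lemma vunit1M x y : vunit1 x -> vunit1 y -> vunit1 (x * y).
Proof.
move=> hx hy; have [x0 sx] := andP hx; have [y0 sy] := andP hy.
rewrite /vunit1 mulf_neq0 //=.
have -> : x * y - 1 = x * (y - 1) + (x - 1) by ring.
by rewrite videalD // videalMl // vring_unitP // dval_vunit1.
Qed.

Lemma vunit1V x : vunit1 x -> vunit1 x^-1.
Proof.
move=> hx; have [x0 sx] := andP hx; rewrite /vunit1 invr_neq0 //=.
have -> : x^-1 - 1 = - (x^-1 * (x - 1)) by field.
by rewrite videalN videalMl // vring_unitP ?invr_neq0 // dvalV // dval_vunit1 ?oppr0.
Qed.

Lemma vunit1Xz x (n : int) : vunit1 x -> vunit1 (x ^ n).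
Proof.
have vunit1Xn m : vunit1 x -> vunit1 (x ^+ m).
  by move=> hx; elim: m => [|m IH]; rewrite ?expr0 ?vunit1_1 // exprS vunit1M.
case: n => n hx; first exact: vunit1Xn.
by rewrite NegzE -exprnN; apply/vunit1V/vunit1Xn.
Qed.

Lemma vunit1_div x y : y != 0 -> v y = 0 -> videal (x - y) -> vunit1 (x / y).
Proof.
move=> y0 vy sxy.
have hs : videal (x / y - 1).
  have -> : x / y - 1 = (x - y) * y^-1 by field.
  by rewrite videalMr // vring_unitP ?invr_neq0 // dvalV // vy oppr0.
rewrite /vunit1 hs andbT; apply: contra videal1F => /eqP x0.
by rewrite -videalN -(add0r (-1)) -x0.
Qed.

Lemma vunit1_tame_trivial s : vunit1 (tame_fsum v s) -> tame_trivial v s.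
Proof. by rewrite /tame_trivial /vunit1 /videal subr_eq0 => /andP[_]. Qed.

Lemma videal_1subX y n : vring y -> videal (1 - y) -> videal (1 - y ^+ n).
Proof.
move=> hy hs; elim: n => [|n IH]; first by rewrite expr0 subrr videal0.
have -> : 1 - y ^+ n.+1 = (1 - y ^+ n) + y ^+ n * (1 - y) by rewrite exprS; ring.
by rewrite videalD // videalMl // vringX.
Qed.

Lemma geom_factor_nat y n : vring y -> videal (1 - y) ->
  exists2 g, videal (g - n%:R) & 1 - y ^+ n = (1 - y) * g.
Proof.
move=> hy hs; exists (\sum_(i < n) y ^+ i).
  have -> : \sum_(i < n) y ^+ i - n%:R = - \sum_(i < n) (1 - y ^+ i).
    by rewrite sumrB sumr_const card_ord opprB.
  by rewrite videalN videal_sum // => i; apply: videal_1subX.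
by rewrite -[1 - y ^+ n]opprB subrX1 -mulNr opprB.
Qed.

Lemma geom_factor y (u : int) : y != 0 -> v y = 0 -> videal (1 - y) ->
  exists g, [/\ vring g, videal (g - u%:~R) & 1 - y ^ u = (1 - y) * g].
Proof.
move=> y0 vy hs; have hy := vring_unitP y0 vy.
case: u => n.
  have [g hg e] := geom_factor_nat n hy hs.
  by exists g; split => //; apply: vring_cong (vring_nat n) hg.
have [g hg e] := geom_factor_nat n.+1 hy hs.
set w := y ^+ n.+1.
have w0 : w != 0 by rewrite expf_neq0.
have hwi : vring w^-1 by rewrite vring_unitP ?invr_neq0 // dvalV // dvalXn // vy mulr0 oppr0.
have hg' : vring g := vring_cong (vring_nat _) hg.
exists (- w^-1 * g); split.
- by rewrite vringM ?vringN.
- rewrite NegzE mulrNz.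
  have -> : - w^-1 * g - - n.+1%:R = - (w^-1 * (g - n.+1%:R)) - n.+1%:R * (w^-1 - 1).
    by field.
  apply: videalB; first by rewrite videalN videalMl.
  apply: videalMl; first exact: vring_nat.
  have -> : w^-1 - 1 = w^-1 * (1 - w) by field.
  by rewrite videalMl // videal_1subX.
- rewrite NegzE -exprnN -/w.
  have -> : 1 - w^-1 = - w^-1 * (1 - w) by field.
  by rewrite e; ring.
Qed.

Section ResidueChar.
Variable p : nat.
Hypotheses (pp : prime p) (hp : videal p%:R).

Lemma videal_dvdz (m : int) : (p%:Z %| m)%Z -> videal m%:~R.
Proof. by case/dvdzP=> q ->; rewrite intrM videalMl ?vring_int. Qed.

Lemma videal_coprimez (u : int) : ~~ (p%:Z %| u)%Z -> ~~ videal u%:~R.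
Proof.
move=> hu; apply/negP=> su.
have cop : gcdz p u = 1.
  rewrite /gcdz absz_nat; congr Posz; apply/eqP.
  by rewrite -/(coprime p `|u|) prime_coprime // -{1}(absz_nat p) -dvdzE.
have [a [b]] := Bezoutz p u; rewrite cop => hab.
have : videal (a * p%:Z + b * u)%:~R by rewrite intrD !intrM videalD // videalMl ?vring_int.
by rewrite hab (negPf videal1F).
Qed.

Lemma vunit1_fermat g (u : int) s : vring g -> videal (g - u%:~R) -> ~~ (p%:Z %| u)%Z ->
  vunit1 (g ^+ (p ^ s - 1)).
Proof.
move=> hg hgu hu; have [g0 _] := videal_cong_unit hg hgu (videal_coprimez hu).
rewrite /vunit1 expf_neq0 //=.
have -> : g ^+ (p ^ s - 1) - 1 = (g ^+ (p ^ s - 1) - (u%:~R) ^+ (p ^ s - 1)) +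
   ((u ^+ (p ^ s - 1) - 1)%:~R) by rewrite intrB rmorphXn /=; ring.
by rewrite videalD ?videal_congX ?vring_int // videal_dvdz // dvdz_fermat.
Qed.

End ResidueChar.

Local Notation tg := (tame_gen v).

Lemma m1_neq0 : (-1 : L) != 0. Proof. by rewrite oppr_eq0 oner_neq0. Qed.

Lemma tame_genMl a a' b : a != 0 -> a' != 0 -> b != 0 -> tg (a * a') b = tg a b * tg a' b.
Proof.
move=> a0 a'0 b0; rewrite /tame_gen dvalM // mulrDl (expfzDr _ _ m1_neq0).
by rewrite (@expfzMl L a a') opprD (expfzDr _ _ b0); ring.
Qed.

Lemma tame_genMr a b b' : a != 0 -> b != 0 -> b' != 0 -> tg a (b * b') = tg a b * tg a b'.
Proof.
move=> a0 b0 b'0; rewrite /tame_gen dvalM // mulrDr (expfzDr _ _ m1_neq0).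
by rewrite (expfzDr _ _ a0) (@expfzMl L b b'); ring.
Qed.

Lemma tame_gen_swap a b : a != 0 -> b != 0 -> tg a b * tg b a = 1.
Proof.
move=> a0 b0; rewrite /tame_gen (mulrC (v b)).
have e1 : (-1 : L) ^ (v a * v b) * (-1) ^ (v a * v b) = 1.
  by rewrite -(@expfzMl L) mulrNN mulr1 exp1rz.
have e2 : a ^ (v b) * a ^ (- v b) = 1 by rewrite -expfzDr // subrr.
have e3 : b ^ (v a) * b ^ (- v a) = 1 by rewrite -expfzDr // subrr.
transitivity (((-1 : L) ^ (v a * v b) * (-1) ^ (v a * v b)) *
  (a ^ (v b) * a ^ (- v b)) * (b ^ (v a) * b ^ (- v a))); first by ring.
by rewrite e1 e2 e3 !mulr1.
Qed.

Lemma tame_gen_unitl a b : v a = 0 -> tg a b = a ^ (v b).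
Proof. by move=> va; rewrite /tame_gen va mul0r oppr0 !expr0z mul1r mulr1. Qed.

Lemma tame_gen_unitr a b : v b = 0 -> tg a b = b ^ (- v a).
Proof. by move=> vb; rewrite /tame_gen vb mulr0 !expr0z !mul1r. Qed.

Lemma tame_gen_diag a : a != 0 -> tg a a = (-1) ^ (v a * v a).
Proof. by move=> a0; rewrite /tame_gen -mulrA -expfzDr // addrN expr0z mulr1. Qed.


Section RootOfUnity.
Variables (N : nat) (z : L).
Hypothesis hz : N.-primitive_root z.

Lemma z_neq0 : z != 0.
Proof. by rewrite (prim_root_eq0 hz) -lt0n (prim_order_gt0 hz). Qed.

Lemma zX_neq0 (c : int) : z ^ c != 0.
Proof. exact: expfz_neq0 z_neq0. Qed.

Lemma dval_zX c : v (z ^ c) = 0.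
Proof.
have vz : v z = 0.
  have := dvalXn N z_neq0; rewrite (prim_expr_order hz) dval1.
  by have := prim_order_gt0 hz; lia.
by rewrite dvalXz ?z_neq0 // vz mulr0.
Qed.

Lemma vring_zX c : vring (z ^ c).
Proof. by rewrite vring_unitP ?zX_neq0 ?dval_zX. Qed.

Lemma zX_eq1 c : (z ^ c == 1) = (N %| `|c|)%N.
Proof.
case: c => n; first by rewrite (prim_order_dvd hz).
by rewrite NegzE -exprnN invr_eq1 (prim_order_dvd hz).
Qed.

Lemma zX_dvdz c : (N%:Z %| c)%Z -> z ^ c = 1.
Proof. by rewrite dvdzE absz_nat -zX_eq1 => /eqP. Qed.

Definition cyclo (c : int) := 1 - z ^ c.

Lemma cyclo_neq0 c : ~~ (N%:Z %| c)%Z -> cyclo c != 0.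
Proof. by rewrite dvdzE absz_nat -zX_eq1 /cyclo subr_eq0 eq_sym. Qed.

Lemma cyclo_dvdz c c' : (N%:Z %| c - c')%Z -> cyclo c = cyclo c'.
Proof. by move=> hN; rewrite /cyclo -(subrK c' c) expfzDr ?z_neq0 // zX_dvdz ?mul1r. Qed.

Lemma vring_cyclo c : vring (cyclo c).
Proof. by rewrite vringB ?vring1 ?vring_zX. Qed.

Lemma cycloN c : cyclo (- c) = - z ^ (- c) * cyclo c.
Proof. by rewrite /cyclo mulrBr mulr1 mulNr -expfzDr ?z_neq0 // addNr expr0z opprK addrC. Qed.

Lemma cycloN_neq0 c : cyclo c != 0 -> cyclo (- c) != 0.
Proof. by move=> c0; rewrite cycloN mulf_neq0 ?oppr_eq0 ?zX_neq0. Qed.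

Lemma dval_cycloN c : cyclo c != 0 -> v (cyclo (- c)) = v (cyclo c).
Proof. by move=> c0; rewrite cycloN dvalM ?oppr_eq0 ?zX_neq0 // dvalN ?zX_neq0 // dval_zX add0r. Qed.

Lemma videal_cycloM a m : videal (cyclo a) -> videal (cyclo (a * m)).
Proof.
move=> h; rewrite /cyclo -exprz_exp; case: m => n; first exact: videal_1subX (vring_zX a) h.
rewrite NegzE -exprnN.
have w0 : (z ^ a) ^+ n.+1 != 0 by rewrite expf_neq0 // zX_neq0.
have -> : 1 - ((z ^ a) ^+ n.+1)^-1 = - (((z ^ a) ^+ n.+1)^-1 * (1 - (z ^ a) ^+ n.+1)).
  by field.
rewrite videalN videalMl ?videal_1subX ?vring_zX //.
by rewrite vring_unitP ?invr_neq0 // dvalV // dvalXn ?zX_neq0 // dval_zX mulr0 oppr0.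
Qed.

Lemma videal_cycloD a b : videal (cyclo a) -> videal (cyclo b) -> videal (cyclo (a + b)).
Proof.
move=> ha hb; rewrite /cyclo expfzDr ?z_neq0 //.
have -> : 1 - z ^ a * z ^ b = (1 - z ^ a) + z ^ a * (1 - z ^ b) by ring.
by rewrite videalD // videalMl // vring_zX.
Qed.

(* [q] is the sum of the [1 - e ^+ i] over the [q]-th roots of unity [e]. *)
Lemma videal_dvd_order q : videal (cyclo 1) -> (q %| N)%N -> (1 < q)%N -> videal q%:R.
Proof.
move=> h qN q1; have pe := dvdn_prim_root hz qN.
set e := z ^+ (N %/ q) in pe.
have e1 : e != 1.
  apply/eqP=> e1; have := prim_order_dvd pe 1; rewrite expr1 e1 eqxx.
  by rewrite dvdn1 => /eqP q1'; rewrite q1' in q1.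
have sum_e : \sum_(i < q) e ^+ i = 0.
  have := subrX1 e q; rewrite (prim_expr_order pe) subrr => /esym/eqP.
  by rewrite mulf_eq0 subr_eq0 (negPf e1) /= => /eqP.
have -> : (q%:R : L) = \sum_(i < q) (1 - e ^+ i).
  by rewrite sumrB sum_e subr0 sumr_const card_ord.
apply: videal_sum => i; rewrite /e -exprM (exprnP z) -[_%:Z]mul1r.
exact: videal_cycloM.
Qed.

Lemma cyclo1_not_videal p q : prime p -> prime q -> p != q -> (p %| N)%N -> (q %| N)%N ->
  ~~ videal (cyclo 1).
Proof.
move=> pp pq pq' pN qN; apply/negP => h.
have sp := videal_dvd_order h pN (prime_gt1 pp).
have sq := videal_dvd_order h qN (prime_gt1 pq).
have cop : gcdn p q = 1%N.
  by apply/eqP; rewrite -/(coprime p q) prime_coprime // dvdn_prime2.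
have [u [w]] := Bezoutz p q; rewrite /gcdz /= cop => huw.
have : videal (u * p%:Z + w * q%:Z)%:~R by rewrite intrD !intrM videalD // videalMl ?vring_int.
by rewrite huw (negPf videal1F).
Qed.

(* The tame symbol of {x_b, x_{-a}} times the coboundary corrections {x_a, X} and {X, x_b},
   with x_c = 1 - z^c and X = x_1; along a chain the corrections telescope. *)
Definition tame_step a b :=
  tg (cyclo a) (cyclo 1) * tg (cyclo b) (cyclo (- a)) * tg (cyclo 1) (cyclo b).

Section PrimePower.
Variables p r : nat.
Hypotheses (pp : prime p) (hN : N = (p ^ r)%N) (r_gt0 : (0 < r)%N).
Hypothesis hX : videal (cyclo 1).

Let X := cyclo 1.
Let E := v X.

Lemma videal_p : videal p%:R.
Proof. by apply: videal_dvd_order hX _ (prime_gt1 pp); rewrite hN dvdn_exp. Qed.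

Lemma cyclo1_neq0 : X != 0.
Proof.
apply: cyclo_neq0; rewrite dvdzE !absz_nat dvdn1 hN -(expn0 p) eqn_exp2l ?prime_gt1 //.
by rewrite -lt0n.
Qed.

Lemma dval_cyclo1_ge0 : 0 <= E.
Proof. by rewrite -vringE ?vring_cyclo // cyclo1_neq0. Qed.

Lemma cyclo_pexp_neq0 s : (s < r)%N -> cyclo (p ^ s)%:Z != 0.
Proof.
move=> sr; apply: cyclo_neq0.
by rewrite dvdzE !absz_nat hN dvdn_Pexp2l ?prime_gt1 // -ltnNge.
Qed.

Lemma cyclo_pexpM s (u : int) : ~~ (p%:Z %| u)%Z ->
  exists g, [/\ g != 0, v g = 0, vring g, videal (g - u%:~R) &
    cyclo ((p ^ s)%:Z * u) = cyclo (p ^ s)%:Z * g].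
Proof.
move=> hu; have hs : videal (cyclo (p ^ s)%:Z) by rewrite -[_%:Z]mul1r videal_cycloM.
have [g [hg hgu e]] := geom_factor u (zX_neq0 (p ^ s)%:Z) (dval_zX _) hs.
have [g0 vg] := videal_cong_unit hg hgu (videal_coprimez pp videal_p hu).
by exists g; split => //; rewrite /cyclo -exprz_exp e.
Qed.

Lemma dval_cyclo_pexpM s (u : int) : (s < r)%N -> ~~ (p%:Z %| u)%Z ->
  cyclo ((p ^ s)%:Z * u) != 0 /\ v (cyclo ((p ^ s)%:Z * u)) = v (cyclo (p ^ s)%:Z).
Proof.
move=> sr hu; have [g [g0 vg _ _ ->]] := cyclo_pexpM s hu.
by rewrite mulf_neq0 ?cyclo_pexp_neq0 // dvalM ?cyclo_pexp_neq0 // vg addr0.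
Qed.

Lemma cyclo_pexpS_prod s : (s < r)%N ->
  cyclo (p ^ s.+1)%:Z = \prod_(i < p) cyclo ((p ^ s)%:Z * (1 + i * p ^ (r.-1 - s))%N%:Z).
Proof.
move=> sr; set y := z ^ (p ^ s)%:Z.
have pN : (p %| N)%N by rewrite hN dvdn_exp.
have pe := dvdn_prim_root hz pN.
have hNp : (N %/ p = p ^ s * p ^ (r.-1 - s))%N.
  rewrite hN -expnD subnKC; last by rewrite -ltnS prednK.
  by rewrite -{1}(prednK r_gt0) expnSr mulnK ?prime_gt0.
have -> : cyclo (p ^ s.+1)%:Z = 1 - y ^+ p by rewrite /cyclo expnSr PoszM -exprz_exp.
rewrite -(prod_1subMroot pe (zX_neq0 _)); apply: eq_bigr => i _.
rewrite /cyclo /y -exprM (exprnP z (N %/ p * i)) -expfzDr ?z_neq0 //; congr (1 - z ^ _).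
by rewrite hNp -PoszD -PoszM; congr Posz; ring.
Qed.

Lemma dval_cyclo_pexp s : (s < r)%N -> v (cyclo (p ^ s)%:Z) = (p ^ s)%:Z * E.
Proof.
elim: s => [|s IH] sr; first by rewrite expn0 mul1r.
have sr' : (s < r)%N by apply: ltnW.
have hu (i : 'I_p) : ~~ (p%:Z %| (1 + i * p ^ (r.-1 - s))%N%:Z)%Z.
  have hd : (p %| i * p ^ (r.-1 - s))%N.
    by apply/dvdn_mull/dvdn_exp => //; rewrite subn_gt0 -ltnS prednK.
  by rewrite dvdzE !absz_nat dvdn_addl // dvdn1 gtn_eqF ?prime_gt1.
rewrite cyclo_pexpS_prod // dval_prod => [|i]; last by case: (dval_cyclo_pexpM sr' (hu i)).
under eq_bigr => i _ do rewrite (proj2 (dval_cyclo_pexpM sr' (hu i))) IH //.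
by rewrite sumr_const card_ord -mulr_natl natz expnSr PoszM; ring.
Qed.

Lemma cyclo_decomp c : ~~ (N%:Z %| c)%Z ->
  exists s u, [/\ c = (p ^ s)%:Z * u, ~~ (p%:Z %| u)%Z, cyclo c != 0 &
     v (cyclo c) = (p ^ s)%:Z * E].
Proof.
move=> hc; have c0 : c != 0 by apply: contra hc => /eqP ->; apply: dvdz0.
have n0 : (0 < `|c|)%N by rewrite absz_gt0.
have [m cop hm] := pfactor_coprime pp n0.
have sr : (logn p `|c| < r)%N.
  rewrite ltnNge; apply: contra hc => rs.
  by rewrite dvdzE absz_nat hm hN dvdn_mull // dvdn_exp2l.
have ec : c = (p ^ logn p `|c|)%:Z * (sgz c * m%:Z).
  by rewrite {1}[c]intEsg {1}hm PoszM; ring.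
have hu : ~~ (p%:Z %| sgz c * m%:Z)%Z.
  have sg1 : `|sgz c|%N = 1%N by move: c0; case: (intP c) => // n _; rewrite ?sgzN.
  by rewrite dvdzE absz_nat abszM sg1 mul1n absz_nat -prime_coprime.
have [c0' vc] := dval_cyclo_pexpM sr hu.
by exists (logn p `|c|), (sgz c * m%:Z); rewrite -ec in c0' vc; rewrite vc dval_cyclo_pexp.
Qed.


Lemma vunit1_zX m : vunit1 (z ^ m).
Proof.
rewrite /vunit1 zX_neq0 /= -videalN opprB.
by have := videal_cycloM m hX; rewrite mul1r.
Qed.

Lemma vunit1_fermat_exp g (u : int) s : vring g -> videal (g - u%:~R) ->
  ~~ (p%:Z %| u)%Z -> vunit1 (g ^ ((p ^ s)%:Z * E - E)).
Proof.
move=> hg hgu hu; have := vunit1_fermat pp videal_p s hg hgu hu.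
have -> : (p ^ s)%:Z * E - E = (p ^ s - 1)%N%:Z * E.
  have : (0 < p ^ s)%N by rewrite expn_gt0 prime_gt0.
  by move: (p ^ s)%N => n n0; rewrite subn1 -(prednK n0) /= intS; ring.
by rewrite -exprz_exp; apply: vunit1Xz.
Qed.

Lemma vunit1_tame_step_coprimel u b : ~~ (p%:Z %| u)%Z -> ~~ (N%:Z %| b)%Z ->
  vunit1 (tame_step u b).
Proof.
move=> hu hb.
have [sb [ub [_ _ B0 vB]]] := cyclo_decomp hb.
have [g [g0 vg hg hgu hA]] := cyclo_pexpM 0 hu; rewrite expn0 mul1r in hA.
have X0 := cyclo1_neq0; have Xg0 : X * g != 0 by rewrite mulf_neq0.
have mz0 : - z ^ (- u) != 0 by rewrite oppr_eq0 zX_neq0.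
have vmz : v (- z ^ (- u)) = 0 by rewrite dvalN ?zX_neq0 // dval_zX.
rewrite /tame_step cycloN hA tame_genMl // tame_genMr // ?mulf_neq0 // tame_genMr //.
rewrite (tame_gen_unitl _ vg) (tame_gen_unitr _ vmz) (tame_gen_unitr _ vg) -/X -/E.
rewrite tame_gen_diag // vB; set beta := (p ^ sb)%:Z * E.
have -> : (-1) ^ (E * E) * g ^ E * ((- z ^ (- u)) ^ (- beta) * (tg (cyclo b) X * g ^ (- beta))) *
    tg X (cyclo b) = ((-1) ^ (E * E) * (-1) ^ (- beta)) * (z ^ (- u)) ^ (- beta) *
    (g ^ E * g ^ (- beta)) * (tg (cyclo b) X * tg X (cyclo b)).
  by rewrite expNrz; ring.
rewrite tame_gen_swap // mulr1 signz_sqr ?dval_cyclo1_ge0 //.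
rewrite -expfzDr ?m1_neq0 // -expfzDr // exprz_exp.
have -> : E - beta = - ((p ^ sb)%:Z * E - E) by rewrite /beta; ring.
rewrite -!invr_expz; apply: vunit1M; first apply: vunit1M.
- apply/vunit1V/(vunit1_fermat_exp (u := -1)); rewrite ?vringN ?vring1 //.
    by rewrite mulrN1z subrr videal0.
  by rewrite dvdzE /= dvdn1 gtn_eqF ?prime_gt1.
- exact: vunit1_zX.
- exact/vunit1V/(vunit1_fermat_exp _ hg hgu).
Qed.

Lemma vunit1_tame_step_coprimer a u : ~~ (N%:Z %| a)%Z -> ~~ (p%:Z %| u)%Z ->
  vunit1 (tame_step a u).
Proof.
move=> ha hu.
have [sa [ua [_ _ A0 vA]]] := cyclo_decomp ha.
have [h [h0 vh hh hhu hB]] := cyclo_pexpM 0 hu; rewrite expn0 mul1r in hB.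
have X0 := cyclo1_neq0.
have A'0 : cyclo (- a) != 0 by apply: cycloN_neq0.
have vmz : v (- z ^ (- a)) = 0 by rewrite dvalN ?zX_neq0 // dval_zX.
rewrite /tame_step hB -/X tame_genMl // (tame_gen_unitl _ vh) dval_cycloN // vA.
rewrite tame_genMr // (tame_gen_unitr _ vh) {1}cycloN tame_genMr ?oppr_eq0 ?zX_neq0 //.
rewrite (tame_gen_unitr _ vmz) tame_gen_diag // -/E; set alpha := (p ^ sa)%:Z * E.
have -> : tg (cyclo a) X * ((- z ^ (- a)) ^ (- E) * tg X (cyclo a) * h ^ alpha) *
    ((-1) ^ (E * E) * h ^ (- E)) = (tg (cyclo a) X * tg X (cyclo a)) *
    ((-1) ^ (E * E) * (-1) ^ (- E)) * (z ^ (- a)) ^ (- E) * (h ^ alpha * h ^ (- E)).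
  by rewrite expNrz; ring.
rewrite tame_gen_swap // mul1r signz_sqr ?dval_cyclo1_ge0 //.
rewrite -expfzDr ?m1_neq0 // subrr expr0z mul1r -expfzDr // exprz_exp.
apply: vunit1M; first exact: vunit1_zX.
exact: vunit1_fermat_exp hh hhu hu.
Qed.

Lemma vunit1_tame_step a b : ~~ (N%:Z %| a)%Z -> ~~ (N%:Z %| b)%Z ->
  ~~ (videal a%:~R && videal b%:~R) -> vunit1 (tame_step a b).
Proof.
move=> ha hb hab; have [sa [ua [ea hua _ _]]] := cyclo_decomp ha.
have [sb [ub [eb hub _ _]]] := cyclo_decomp hb.
case: sa ea => [|sa] ea.
  by rewrite ea expn0 mul1r; apply: vunit1_tame_step_coprimel.
case: sb eb => [|sb] eb.
  by rewrite eb expn0 mul1r; apply: vunit1_tame_step_coprimer.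
have videal_pS s w : videal ((p ^ s.+1)%:Z * w)%:~R.
  by rewrite intrM videalMr ?vring_int // expnSr PoszM intrM videalMl ?vring_int ?videal_p.
by rewrite ea eb !videal_pS in hab.
Qed.

End PrimePower.

Definition chain_tame (d : nat -> int) k :=
  \prod_(0 <= i < k) tg (cyclo (d i.+1)) (cyclo (- d i)).

Lemma dval_cyclo_unit c : ~~ videal (cyclo c) -> v (cyclo c) = 0 /\ v (cyclo (- c)) = 0.
Proof.
move=> hc; have [c0 vc] := vring_unit (vring_cyclo c) hc.
by rewrite dval_cycloN.
Qed.

Section Chain.
Variables (b d : nat -> int) (k : nat).
Hypothesis hd0 : d 0%N = 1.
Hypothesis hdet : forall i, (0 < i <= k)%N -> b i.-1 * d i - b i * d i.-1 = 1.
Hypothesis hnd : forall i, (i <= k)%N -> ~~ (N%:Z %| d i)%Z.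

Lemma chain_tameS m : chain_tame d m.+1 = chain_tame d m * tg (cyclo (d m.+1)) (cyclo (- d m)).
Proof. by rewrite /chain_tame big_nat_recr. Qed.

Lemma cyclo_chain_neq0 i : (i <= k)%N -> cyclo (d i) != 0.
Proof. by move=> ik; apply/cyclo_neq0/hnd. Qed.

Lemma chain_bezout m : (m < k)%N -> d m.+1 * b m + d m * (- b m.+1) = 1.
Proof. by move=> mk; rewrite -(hdet (i := m.+1)) /= ?mk //; ring. Qed.

Lemma chain_recurrence m : (m.+1 < k)%N ->
  d m.+2 + d m = d m.+1 * (b m * d m.+2 - b m.+2 * d m).
Proof.
move=> mk.
have e1 : b m * d m.+1 - b m.+1 * d m = 1 by apply: (hdet (i := m.+1)); lia.
have e2 : b m.+1 * d m.+2 - b m.+2 * d m.+1 = 1 by apply: (hdet (i := m.+2)); lia.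
apply/eqP; rewrite -subr_eq0.
have -> : d m.+2 + d m - d m.+1 * (b m * d m.+2 - b m.+2 * d m) =
  - d m.+2 * (b m * d m.+1 - b m.+1 * d m - 1) - d m * (b m.+1 * d m.+2 - b m.+2 * d m.+1 - 1)
  by ring.
by rewrite e1 e2 subrr !mulr0 oppr0 subrr.
Qed.

Section UnitCase.
Hypothesis hX : ~~ videal (cyclo 1).

Lemma chain_not_videal2 m : (m < k)%N ->
  ~~ (videal (cyclo (d m)) && videal (cyclo (d m.+1))).
Proof.
move=> mk; apply: contra hX => /andP[h0 h1].
by rewrite -(chain_bezout mk) videal_cycloD // videal_cycloM.
Qed.

(* Partial products telescope up to a factor that disappears as soon as x_{d_{m+1}} is a unit. *)
Let partial m := chain_tame d m.+1 * cyclo (- d m) ^ (v (cyclo (d m.+1))).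

Lemma vunit1_partial0 : (0 < k)%N -> vunit1 (partial 0).
Proof.
move=> k0; rewrite /partial chain_tameS /chain_tame big_geq // mul1r hd0.
have [_ vN1] := dval_cyclo_unit hX.
have X0 : cyclo 1 != 0 by apply: contraNneq hX => ->; apply: videal0.
by rewrite (tame_gen_unitr _ vN1) -expfzDr ?cycloN_neq0 // addNr expr0z vunit1_1.
Qed.

Lemma vunit1_partialS m : (m.+1 < k)%N -> vunit1 (partial m) -> vunit1 (partial m.+1).
Proof.
move=> mk IH; have hm1 : (m.+1 <= k)%N by lia.
rewrite /partial chain_tameS.
have [hs|hns] := boolP (videal (cyclo (d m.+1))); last first.
  have [v1 vN1] := dval_cyclo_unit hns.
  rewrite (tame_gen_unitr _ vN1) -mulrA -expfzDr ?cycloN_neq0 ?cyclo_chain_neq0 //.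
  by rewrite addNr expr0z mulr1; move: IH; rewrite /partial v1 expr0z mulr1.
have ns2 : ~~ videal (cyclo (d m.+2)) by have := chain_not_videal2 mk; rewrite hs.
have ns0 : ~~ videal (cyclo (d m)) by have := chain_not_videal2 (ltnW mk); rewrite hs andbT.
have [v2 _] := dval_cyclo_unit ns2; have [_ vy] := dval_cyclo_unit ns0.
rewrite v2 expr0z mulr1 (tame_gen_unitl _ v2) dval_cycloN ?cyclo_chain_neq0 //.
set e := v (cyclo (d m.+1)).
have y0 : cyclo (- d m) != 0 by rewrite cycloN_neq0 ?cyclo_chain_neq0 //; lia.
have -> : chain_tame d m.+1 * cyclo (d m.+2) ^ e =
    (chain_tame d m.+1 * cyclo (- d m) ^ e) * (cyclo (d m.+2) / cyclo (- d m)) ^ e.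
  rewrite expfzMl exprz_inv -mulrA; congr (_ * _).
  by rewrite mulrCA -expfzDr // addrN expr0z mulr1.
apply: vunit1M => //; apply/vunit1Xz/vunit1_div => //.
have -> : cyclo (d m.+2) - cyclo (- d m) =
    z ^ (- d m) * cyclo (d m.+1 * (b m * d m.+2 - b m.+2 * d m)).
  rewrite -chain_recurrence // /cyclo mulrBr mulr1 -!expfzDr ?z_neq0 //.
  by rewrite addrCA addNr addr0; ring.
by rewrite videalMl ?vring_zX // videal_cycloM.
Qed.

Lemma vunit1_chain_tame_unit : ~~ videal (cyclo (d k)) -> vunit1 (chain_tame d k).
Proof.
move=> hk; case Ek : k => [|k']; first by rewrite /chain_tame big_geq // vunit1_1.
have inv m : (m <= k')%N -> vunit1 (partial m).
  elim: m => [|m IH] mk; first by apply: vunit1_partial0; rewrite Ek.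
  by apply: vunit1_partialS; [rewrite Ek | apply: IH; lia].
have [vk _] := dval_cyclo_unit hk.
by have := inv k' (leqnn _); rewrite /partial -Ek vk expr0z mulr1.
Qed.

End UnitCase.

Lemma vunit1_chain_tame_ramified p r : prime p -> N = (p ^ r)%N -> (0 < r)%N ->
  videal (cyclo 1) -> cyclo (d k) = cyclo 1 -> vunit1 (chain_tame d k).
Proof.
move=> pp hN r0 hX hdk; set X := cyclo 1.
have X0 : X != 0 := cyclo1_neq0 pp hN r0.
have XX : tg X X * tg X X = 1.
  by rewrite tame_gen_diag // -expfzMl mulrNN mulr1 exp1rz.
suff inv m : (m <= k)%N -> vunit1 (chain_tame d m * tg X X * tg X (cyclo (d m))).
  by have := inv k (leqnn _); rewrite hdk -/X -mulrA XX mulr1.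
elim: m => [|m IH] mk; first by rewrite /chain_tame big_geq // mul1r hd0 -/X XX vunit1_1.
have mk' : (m <= k)%N by apply: ltnW.
have -> : chain_tame d m.+1 * tg X X * tg X (cyclo (d m.+1)) =
    (chain_tame d m * tg X X * tg X (cyclo (d m))) * tame_step (d m) (d m.+1).
  rewrite chain_tameS /tame_step -/X.
  have sw := tame_gen_swap X0 (cyclo_chain_neq0 mk').
  transitivity (chain_tame d m * tg X X * (tg X (cyclo (d m)) * tg (cyclo (d m)) X) *
    tg (cyclo (d m.+1)) (cyclo (- d m)) * tg X (cyclo (d m.+1))); first by rewrite sw mulr1; ring.
  by ring.
apply: vunit1M; first exact: IH.
apply: (vunit1_tame_step pp hN r0 hX); [exact: hnd | exact: hnd |].
apply: contra videal1F => /andP[s1 s2].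
have /(congr1 (fun x : int => x%:~R : L)) := chain_bezout mk.
by rewrite intrD !intrM mulr1z => <-; rewrite videalD // videalMr ?vring_int.
Qed.

End Chain.

End RootOfUnity.
End DiscreteValuation.

Lemma in_K2O_mod_K2O (L : fieldType) (z : L) t : in_K2O t -> in_K2O_mod z t.
Proof.
move=> h; exists t, 0; split => //; exists [::]; split => // a b.
rewrite /fcoef big_cat /fscale big_map big_cat /= !big_cons !big_nil.
under [X in _ + (X + _)]eq_bigr do rewrite mulN1r.
by rewrite sumrN; case: ifP => _; rewrite ?mulr0 ?addr0 subrr.
Qed.

Section Theta.
Variables (L : fieldType) (z : L) (s : seq (int * int)) (k : nat).
Hypothesis size_s : size s = k.+1.

Let ds i := (nth (0, 0) s i).2.

Lemma size_theta_pairs : size (zip s (behead s)) = k.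
Proof. by rewrite size_zip size_behead size_s; apply/minn_idPr. Qed.

Lemma nth_theta_pairs i : (i < k)%N ->
  nth ((0, 0), (0, 0)) (zip s (behead s)) i = (nth (0, 0) s i, nth (0, 0) s i.+1).
Proof. by move=> ik; rewrite nth_zip_cond size_theta_pairs ik /= nth_behead. Qed.

Lemma tame_fsum_theta v : tame_fsum v (theta_fsum z s) = chain_tame v z ds k.
Proof.
rewrite /tame_fsum /theta_fsum big_map (big_nth ((0, 0), (0, 0))) size_theta_pairs.
by apply: eq_big_nat => i /andP[_ ik]; rewrite nth_theta_pairs // expr1z.
Qed.

Lemma theta_wf N : N.-primitive_root z -> (forall i, (i <= k)%N -> ~~ (N%:Z %| ds i)%Z) ->
  fsum_wf (theta_fsum z s).
Proof.
move=> hz hnd; apply/allP => e /mapP[[p1 p2] hin ->] /=.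
have [i ilt] := (nthP ((0, 0), (0, 0))) hin; rewrite size_theta_pairs in ilt.
rewrite nth_theta_pairs // => -[<- <-].
have := cyclo_neq0 hz (hnd i.+1 ilt); have := cycloN_neq0 hz (cyclo_neq0 hz (hnd i (ltnW ilt))).
by rewrite /cyclo /ds => -> ->.
Qed.

End Theta.

Section CongruenceSubgroup.
Variables (N : nat) (a b c d : int).
Hypotheses (N_ge2 : (2 <= N)%N) (hG : in_tGamma0 N a b c d).

Local Notation det := (a * d - b * c).

Lemma det_tGamma0_sqr : det * det = 1.
Proof. by case: hG => -[] ->. Qed.

Lemma tGamma0_ndvd_d : ~~ (N%:Z %| det * d)%Z.
Proof.
apply/negP => hNd; have hN1 : (N%:Z %| det * det)%Z.
  have -> : det * det = a * (det * d) - (det * b) * c by ring.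
  by case: hG => _ hNc; apply: rpredB; apply: dvdz_mull.
by move: hN1; rewrite det_tGamma0_sqr dvdzE absz_nat dvdn1 => /eqP N1; move: N_ge2; rewrite N1.
Qed.

Lemma tGamma0_inverse_mod : (N%:Z %| det * d * a - 1)%Z.
Proof.
have -> : det * d * a - 1 = det * b * c by rewrite -det_tGamma0_sqr; ring.
by case: hG => _ hNc; apply: dvdz_mull.
Qed.

Lemma connecting_seq_chain s : connecting_seq N a b c d s ->
  exists k, [/\ size s = k.+1, (nth (0, 0) s 0).2 = 1,
    forall i, (0 < i <= k)%N -> (nth (0, 0) s i.-1).1 * (nth (0, 0) s i).2
        - (nth (0, 0) s i).1 * (nth (0, 0) s i.-1).2 = 1,
    forall i, (i <= k)%N -> ~~ (N%:Z %| (nth (0, 0) s i).2)%Z &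
    (nth (0, 0) s k).2 = det * d].
Proof.
move=> [k [hsz [h0 [hk [hdet hnd]]]]]; exists k; split; rewrite ?h0 ?hk //.
move=> i; rewrite leq_eqVlt => /orP[/eqP ->|]; last exact: hnd.
by rewrite hk tGamma0_ndvd_d.
Qed.

End CongruenceSubgroup.

Lemma theta_in_K2O_mod N (L : fieldType) (z : L) a b c d s :
  (2 <= N)%N -> N.-primitive_root z -> in_tGamma0 N a b c d -> connecting_seq N a b c d s ->
  (forall v, is_dval v -> videal v (cyclo z 1) ->
    exists p r, [/\ prime p, N = (p ^ r)%N & cyclo z ((a * d - b * c) * d) = cyclo z 1]) ->
  in_K2O_mod z (theta_fsum z s).
Proof.
move=> N_ge2 hz hG hs hram.
have [k [hsz hd0 hdet hnd hdk]] := connecting_seq_chain N_ge2 hG hs.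
apply: in_K2O_mod_K2O; split; first exact: theta_wf hz hnd.
move=> v hv; apply: vunit1_tame_trivial; rewrite (tame_fsum_theta _ hsz).
have [hX|hX] := boolP (videal v (cyclo z 1)).
  have [p [r [pp hN e]]] := hram v hv hX.
  have r_gt0 : (0 < r)%N by case: r hN => // hN; rewrite hN expn0 in N_ge2.
  by apply: (vunit1_chain_tame_ramified hv hz hd0 hdet hnd pp hN r_gt0 hX); rewrite hdk.
apply: (vunit1_chain_tame_unit hv hz hd0 hdet hnd hX); apply: contra hX => hk.
have := videal_cycloM hv hz a hk.
by rewrite hdk (cyclo_dvdz hz (tGamma0_inverse_mod hG)).
Qed.

Unset Implicit Arguments.

Theorem mainTheorem10 (N : nat) (L : fieldExtType rat) (z : L) :
  (2 <= N)%N -> N.-primitive_root z -> <<1%VS; z>>%VS = fullv ->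
  ((exists p q : nat, [/\ prime p, prime q, p != q, (p %| N)%N & (q %| N)%N]) ->
     forall (a b c d : int) (s : seq (int * int)),
       in_tGamma0 N a b c d -> connecting_seq N a b c d s ->
       in_K2O_mod z (theta_fsum z s))
  /\
  ((exists p k : nat, prime p /\ N = (p ^ k)%N) ->
     forall (a b c d : int) (s : seq (int * int)),
       in_Gamma1 N a b c d -> connecting_seq N a b c d s ->
       in_K2O_mod z (theta_fsum z s)).
Proof.
move=> N_ge2 hz _; split.
- move=> [p [q [pp pq pq' pN qN]]] a b c d s hG hs.
  apply: (theta_in_K2O_mod N_ge2 hz hG hs) => v hv hX.
  by have := cyclo1_not_videal hv hz pp pq pq' pN qN; rewrite hX.
- move=> [p [r [pp hN]]] a b c d s [hdet [hNc hNd]] hs.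
  have hG : in_tGamma0 N a b c d by split => //; left.
  apply: (theta_in_K2O_mod N_ge2 hz hG hs) => v hv hX.
  by exists p, r; split => //; rewrite hdet mul1r (cyclo_dvdz hz hNd).
Qed.
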